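(* For every $\varepsilon>0$ there is a constant $C>0$ such that the following holds. For every finite set $X$ with $|X|=n\ge 2$ and every nontrivial monotone increasing family $\mathcal F\subseteq 2^X$, writing $m(p)=\mu_p(\mathcal F)$ and $p_c=p_c(\mathcal F)$, there exists $p\in[n^{-\varepsilon}p_c,\;p_c]$ such that $$p\,m'(p)\;\le\;C\,m(p)\,\log_2\!\big(1/m(p)\big)$$ (equivalently, $p\,m'(p)\le C\log_2(1/p)\cdot m(p)\log_p m(p)$, i.e. $\mathcal F$ is $(C\log_2(1/p),p)$-optimal).
   Context: For a finite set $X$ with $|X|=n$ and $p\in[0,1]$, $\mu_p$ is the product measure on $2^X$ given by $\mu_p(S)=p^{|S|}(1-p)^{n-|S|}$, and $\mu_p(\mathcal F)=\sum_{S\in\mathcal F}\mu_p(S)$. A family $\mathcal F\subseteq 2^X$ is monotone increasing if $B\supseteq A\in\mathcal F$ implies $B\in\mathcal F$; it is nontrivial if $\mathcal F\neq\emptyset$ and $\mathcal F\neq 2^X$. For such $\mathcal F$, $m(p)=\mu_p(\mathcal F)$ is a strictly increasing polynomial in $p$ with $m(0)=0$, $m(1)=1$, and $p_c(\mathcal F)$ denotes the unique $p\in[0,1]$ with $\mu_p(\mathcal F)=1/2$. Given $C>0$, $\mathcal F$ is called $(C,p)$-optimal if $p\,m'(p)\le C\,m(p)\log_p m(p)$, where $\log_p x=\ln x/\ln p$. *)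

From HB Require Import structures.
From mathcomp Require Import all_boot all_order all_algebra.
From mathcomp Require Import all_classical all_reals all_analysis.
Set Implicit Arguments. Unset Strict Implicit. Unset Printing Implicit Defensive.
Import Order.TTheory GRing.Theory Num.Theory.
Local Open Scope ring_scope.

Definition mu (R : realType) (X : finType) (p : R) (F : {set {set X}}) : R :=
  \sum_(S in F) p ^+ #|S| * (1 - p) ^+ (#|X| - #|S|).

Definition monotone_increasing (X : finType) (F : {set {set X}}) : Prop :=
  forall A B : {set X}, A \subset B -> A \in F -> B \in F.

Definition nontrivial (X : finType) (F : {set {set X}}) : Prop :=
  F != finset.set0 /\ F != [set: {set X}]%SET.

Definition log2 (R : realType) (x : R) : R := ln x / ln 2.

From HB Require Import structures.
From mathcomp Require Import all_boot all_order all_algebra.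
From mathcomp Require Import all_classical all_reals all_analysis.
From mathcomp Require Import ring lra.
Set Implicit Arguments. Unset Strict Implicit. Unset Printing Implicit Defensive.
Import Order.TTheory GRing.Theory Num.Theory.
Local Open Scope ring_scope.

(* Write m p := mu p F, a := n^-eps pc, and consider on [a, pc] the potential
   ln (- ln (m p)) + c ln p.  Since m (s p) >= s^n m p for s <= 1 and
   m pc = 1/2, we get m a >= n^(-eps n) / 2, so - ln (m a) <= eps n ln n + ln 2
   and the first term drops by at most (2 + eps / ln^2 2) ln n from a to pc,
   while the second rises by c eps ln n.  For c = (2 + eps / ln^2 2) / eps the
   potential is therefore not smaller at pc than at a, and the mean value
   theorem gives a p in [a, pc] where its derivative
   - m' p / (m p (- ln (m p))) + c / p is nonnegative, that is
   p m' p <= c m p (- ln (m p)) = c ln 2 * m p log2 (1 / m p). *)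

Section BiasedMeasure.
Variables (R : realType) (X : finType).
Implicit Types (F : {set {set X}}) (p q s : R).

Lemma mu_setT p : mu p [set: {set X}] = 1.
Proof.
have prod1 : \prod_(x : X) \sum_(b : bool) (if b then p else 1 - p) = 1.
  by rewrite big1 // => x _; rewrite big_bool /= addrC subrK.
rewrite /mu [LHS](eq_bigl xpredT) => [|S]; last by rewrite inE.
rewrite -[RHS]prod1 bigA_distr_bigA /=.
rewrite (reindex (fun S : {set X} => [ffun x => x \in S])) /=; last first.
  exists (fun f : {ffun X -> bool} => [set x | f x]) => [S _|f _].
    by apply/setP => x; rewrite inE ffunE.
  by apply/ffunP => x; rewrite ffunE inE.
apply: eq_bigr => S _; rewrite [RHS](bigID (mem S)) /=.
rewrite [in RHS](eq_bigr (fun=> p)); last by move=> x xS; rewrite ffunE xS.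
rewrite [Y in _ = _ * Y](eq_bigr (fun=> 1 - p)); last first.
  by move=> x /negbTE xS; rewrite ffunE xS.
rewrite !prodr_const -(cardC S) addKn.
by congr (_ * _ ^+ _); apply: eq_card => x; rewrite !inE.
Qed.

Lemma mu0 F : mu (0 : R) F = (finset.set0 \in F)%:R.
Proof.
rewrite /mu (eq_bigr (fun S => (S == finset.set0)%:R)) => [|S _]; last first.
  by rewrite expr0n cards_eq0 subr0 expr1n mulr1.
have [F0|F0] := boolP (finset.set0 \in F).
  by rewrite (bigD1 finset.set0) //= eqxx big1 ?addr0 // => S /andP[_ /negbTE->].
by rewrite big1 // => S SF; case: eqP SF => // ->; rewrite (negbTE F0).
Qed.

Lemma mu_eq_half_gt0 F p : 0 <= p -> mu p F = 2^-1 -> 0 < p.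
Proof.
rewrite le_eqVlt => /orP[/eqP<- | //]; rewrite mu0.
by case: (_ \in _) => /=; lra.
Qed.

Lemma weight_ge0 p (S : {set X}) :
  0 <= p <= 1 -> 0 <= p ^+ #|S| * (1 - p) ^+ (#|X| - #|S|).
Proof. by case/andP => p0 p1; rewrite mulr_ge0 // exprn_ge0 // subr_ge0. Qed.

Lemma mu_lt1 F p : F != [set: {set X}] -> 0 < p < 1 -> mu p F < 1.
Proof.
move=> FT /andP[p0 p1].
have [S0 S0F] : exists S0, S0 \notin F.
  case: (pickP (fun S => S \notin F)) => [S0 S0F|allF]; first by exists S0.
  by case/negP: FT; apply/eqP/setP => S; rewrite inE; move/negbFE: (allF S).
rewrite -(mu_setT p) /mu [Y in _ < Y](eq_bigl xpredT) => [|S]; last by rewrite inE.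
rewrite [Y in _ < Y](bigID (mem F)) /= ltrDl (bigD1 S0) //=.
apply: ltr_pwDl; first by rewrite mulr_gt0 // exprn_gt0 // subr_gt0.
by apply: sumr_ge0 => S _; apply: weight_ge0; rewrite !ltW.
Qed.

Lemma mu_scale_ge F s q :
  0 < s <= 1 -> 0 <= q <= 1 -> s ^+ #|X| * mu q F <= mu (s * q) F.
Proof.
move=> /andP[s0 s1] /andP[q0 q1]; rewrite /mu mulr_sumr; apply: ler_sum => S _.
have sXS : s ^+ #|X| <= s ^+ #|S|.
  by apply: ler_wiXn2l; [exact: ltW | done | exact: max_card].
have qX : (1 - q) ^+ (#|X| - #|S|) <= (1 - s * q) ^+ (#|X| - #|S|).
  by apply: lerXn2r; rewrite ?nnegrE; nra.
have w0 : 0 <= q ^+ #|S| * (1 - q) ^+ (#|X| - #|S|) by rewrite weight_ge0 ?q0.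
rewrite exprMn -mulrA (le_trans (ler_wpM2r w0 sXS)) //.
apply: ler_wpM2l; first by rewrite exprn_ge0 // ltW.
by apply: ler_wpM2l; rewrite ?exprn_ge0.
Qed.

Lemma mu_gt0 F p q : 0 < q <= p -> p <= 1 -> 0 < mu p F -> 0 < mu q F.
Proof.
move=> /andP[q0 qp] p1 mp0; have p0 := lt_le_trans q0 qp.
have s01 : 0 < q / p <= 1 by rewrite divr_gt0 // ler_pdivrMr // mul1r.
have p01 : 0 <= p <= 1 by rewrite ltW.
have := mu_scale_ge F s01 p01; rewrite divfK ?gt_eqF //; apply: lt_le_trans.
by rewrite mulr_gt0 // exprn_gt0 // divr_gt0.
Qed.

Lemma mu_in01_le F p q : F != [set: {set X}] -> 0 < q <= p -> p <= 1 ->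
  0 < mu p F < 1 -> 0 < mu q F < 1.
Proof.
move=> FT qp p1 /andP[mp0 mp1]; rewrite (mu_gt0 qp p1 mp0) /=.
case/andP: qp => q0; rewrite le_eqVlt => /orP[/eqP-> // | qp].
by rewrite mu_lt1 // q0 (lt_le_trans qp).
Qed.

Lemma neg_ln_mu_scale_le F s q : 0 < s <= 1 -> 0 <= q <= 1 -> 0 < mu q F ->
  - ln (mu (s * q) F) <= - (#|X|%:R * ln s) - ln (mu q F).
Proof.
move=> s01 q01 mq0; have /andP[s0 _] := s01.
have sXmq0 : 0 < s ^+ #|X| * mu q F by rewrite mulr_gt0 // exprn_gt0.
have mu_le := mu_scale_ge F s01 q01.
have := mu_le; rewrite -ler_ln ?posrE ?(lt_le_trans sXmq0) //.
by rewrite lnM ?posrE ?exprn_gt0 // lnXn // -[_ *+ #|X|]mulr_natl; lra.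
Qed.

Lemma mu_derivable F p : derivable (fun q : R => mu q F) p 1.
Proof.
have -> : (fun q : R => mu q F) =
    \sum_(S in F) (fun q : R => q ^+ #|S| * (1 - q) ^+ (#|X| - #|S|)).
  by apply/funext => q; rewrite fct_sumE.
apply: (big_ind (fun g : R -> R => derivable g p 1)) => [|g h|S _].
- exact: derivable_cst.
- exact: derivableD.
- have -> : (fun q : R => q ^+ #|S| * (1 - q) ^+ (#|X| - #|S|)) =
      id ^+ #|S| * (cst 1 - id) ^+ (#|X| - #|S|).
    by apply/funext => q; rewrite /= !exprfctE.
  apply: derivableM; apply: derivableX; first exact: derivable_id.
  by apply: derivableB; [exact: derivable_cst | exact: derivable_id].
Qed.

End BiasedMeasure.

Section LogLogPotential.
Variables (R : realType) (f : R -> R) (a b c : R).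
Hypotheses (a_gt0 : 0 < a) (a_lt_b : a < b).
Hypothesis f_derivable : forall x, a <= x <= b -> derivable f x 1.
Hypothesis f_in01 : forall x, a <= x <= b -> 0 < f x < 1.

(* Mean value theorem for the potential [ln (- ln f x) + c ln x], which the
   hypothesis says is not smaller at [b] than at [a]. *)
Lemma exists_small_elasticity :
  ln (- ln (f a)) - ln (- ln (f b)) <= c * (ln b - ln a) ->
  exists2 x, a <= x <= b & x * derive1 f x <= c * f x * - ln (f x).
Proof.
move=> potential_le.
pose phi : R -> R := (@ln R) \o (- ((@ln R) \o f)) + c *: (@ln R).
pose dphi (x : R) : R := (- ln (f x))^-1 * - ((f x)^-1 * 'D_1 f x) + c *: x^-1.
have phiE y : phi y = ln (- ln (f y)) + c * ln y by [].
have phi_derive x : a <= x <= b -> is_derive x 1 phi (dphi x).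
  move=> xab; have /andP[fx0 fx1] := f_in01 xab.
  have x0 : 0 < x by case/andP: xab => + _; exact: lt_le_trans.
  have L0 : 0 < - ln (f x) by rewrite oppr_gt0 ln_lt0 // fx0 fx1.
  have df := derivableP (f_derivable xab).
  have dlnf := is_deriveN (is_derive1_comp (is_derive1_ln fx0) df).
  have dlnlnf := @is_derive1_comp R (@ln R) _ x _ _ (is_derive1_ln L0) dlnf.
  exact: is_deriveD dlnlnf (is_deriveZ c (is_derive1_ln x0)).
have phi_derive_oo x : x \in `]a, b[ -> is_derive x 1 phi (dphi x).
  by rewrite in_itv /= => /andP[xa xb]; apply: phi_derive; rewrite !ltW.
have phi_derivable : {in `[a, b], forall x, derivable phi x 1}.
  move=> x; rewrite in_itv /= => xab.
  exact: (@ex_derive _ _ _ _ _ _ _ (phi_derive x xab)).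
have phi_cont := derivable_within_continuous phi_derivable.
have [x xab phi_mvt] := MVT a_lt_b phi_derive_oo phi_cont.
move: xab; rewrite in_itv /= => /andP[ax xb]; have x0 := lt_trans a_gt0 ax.
have xab : a <= x <= b by rewrite !ltW.
have dphi_ge0 : 0 <= dphi x.
  have ba : 0 < b - a by rewrite subr_gt0.
  rewrite -(pmulr_lge0 _ ba) -phi_mvt !phiE.
  move: potential_le; rewrite mulrBr; lra.
exists x => //.
have /andP[fx0 fx1] := f_in01 xab.
have lnfx_lt0 : ln (f x) < 0 by rewrite ln_lt0 // fx0 fx1.
have L0 : 0 < - ln (f x) by rewrite oppr_gt0.
have : 0 <= x * f x * - ln (f x) * dphi x by rewrite mulr_ge0 // ltW // !mulr_gt0.
have -> : x * f x * - ln (f x) * dphi x = c * f x * - ln (f x) - x * 'D_1 f x.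
  rewrite /dphi -[c *: _]/(c / x); field.
  by rewrite (gt_eqF x0) (gt_eqF fx0) (lt_eqF lnfx_lt0).
have -> : derive1 f x = 'D_1 f x by exact: derive1E.
by rewrite subr_ge0.
Qed.

End LogLogPotential.

Lemma ln_xlnx_bound (R : realType) (eps n : R) : 0 < eps -> 2 <= n ->
  ln (eps * n * ln n + ln 2) - ln (ln 2) <= (2 + eps / ln 2 ^+ 2) * ln n.
Proof.
move=> eps0 n2; set l2 := ln (2 : R).
have l2_gt0 : 0 < l2 by rewrite ln_gt0 // ltr1n.
have n0 : 0 < n by apply: lt_le_trans n2.
have l2_le : l2 <= ln n by rewrite ler_ln ?posrE.
have lnn_lt : ln n < n := ln_sublinear n0.
have eps_l2 : 0 < eps / l2 by rewrite divr_gt0.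
have bound : eps * n * ln n + l2 <= l2 * (1 + eps / l2) * n ^+ 2.
  have -> : l2 * (1 + eps / l2) = l2 + eps by field; rewrite gt_eqF.
  have : eps * n * ln n <= eps * n * n by rewrite ler_wpM2l ?ltW ?mulr_gt0.
  have : l2 * 1 <= l2 * (n * n) by rewrite ler_wpM2l ?ltW //; nra.
  rewrite expr2; lra.
have ln_rhs :
    ln (l2 * (1 + eps / l2) * n ^+ 2) = ln l2 + ln (1 + eps / l2) + 2 * ln n.
  by rewrite !lnM ?posrE ?mulr_gt0 ?exprn_gt0 ?addr_gt0 // mulr2n mulrDl mul1r.
have ln1D : ln (1 + eps / l2) <= eps / l2.
  by rewrite le_ln1Dx // (lt_trans _ eps_l2).
have eps_ln : eps / l2 <= eps / l2 ^+ 2 * ln n.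
  have -> : eps / l2 = eps / l2 ^+ 2 * l2 by field; rewrite gt_eqF.
  by rewrite ler_wpM2l // ltW // divr_gt0 // exprn_gt0.
have lhs_gt0 : 0 < eps * n * ln n + l2.
  by rewrite addr_gt0 // !mulr_gt0 // (lt_le_trans l2_gt0).
have := bound; rewrite -ler_ln ?posrE ?(lt_le_trans lhs_gt0) // ln_rhs.
rewrite mulrDl; lra.
Qed.

Lemma powRN_in01 (R : realType) (n eps : R) : 1 < n -> 0 < eps ->
  0 < n `^ (- eps) < 1.
Proof.
move=> n1 eps0; have n0 := lt_trans ltr01 n1.
have r0 : 0 < n `^ (- eps) by apply: powR_gt0.
by rewrite r0 -ltr_ln ?posrE // ln1 ln_powR mulNr oppr_lt0 mulr_gt0 ?ln_gt0.
Qed.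

Lemma ln_neg_ln_mu_gap_le (R : realType) (X : finType) (F : {set {set X}})
    (eps pc a : R) : a = #|X|%:R `^ (- eps) * pc ->
  0 < eps -> (2 <= #|X|)%N -> 0 < pc <= 1 -> mu pc F = 2^-1 -> mu a F < 1 ->
  ln (- ln (mu a F)) - ln (- ln (mu pc F)) <=
    (2 + eps / ln 2 ^+ 2) / eps * (ln pc - ln a).
Proof.
move=> -> {a} eps0 X2 /andP[pc0 pc1] mu_pc mua_lt1.
set n : R := #|X|%:R; set r := n `^ (- eps); set a := r * pc; set l2 := ln (2 : R).
have l2_gt0 : 0 < l2 by rewrite ln_gt0 // ltr1n.
have n2 : 2 <= n by rewrite ler_nat.
have n1 : 1 < n by rewrite (lt_le_trans _ n2) ?ltr1n.
have /andP[r0 r1] : 0 < r < 1 by rewrite powRN_in01.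
have ln_r : ln r = - (eps * ln n) by rewrite ln_powR mulNr.
have mupc_gt0 : 0 < mu pc F by rewrite mu_pc invr_gt0.
have r01 : 0 < r <= 1 by rewrite r0 ltW.
have pc01 : 0 <= pc <= 1 by rewrite ltW.
have neg_ln_mua : - ln (mu a F) <= eps * n * ln n + l2.
  have := neg_ln_mu_scale_le r01 pc01 mupc_gt0.
  by rewrite -/a mu_pc lnV ?posrE // ln_r -/l2; lra.
have mua_gt0 : 0 < mu a F.
  by apply: lt_le_trans (mu_scale_ge F r01 pc01); rewrite mulr_gt0 ?exprn_gt0.
have ln_ratio : ln pc - ln a = eps * ln n by rewrite /a lnM ?posrE // ln_r; lra.
have c_eps : (2 + eps / l2 ^+ 2) / eps * (eps * ln n) = (2 + eps / l2 ^+ 2) * ln n.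
  by field; rewrite !gt_eqF.
rewrite mu_pc lnV ?posrE // opprK ln_ratio c_eps.
apply: le_trans (ln_xlnx_bound eps0 n2); rewrite lerD2r.
have ln_mua_lt0 : ln (mu a F) < 0 by rewrite ln_lt0 // mua_gt0.
rewrite ler_ln ?posrE //; first lra.
by rewrite addr_gt0 // !mulr_gt0 ?ln_gt0 // (lt_trans ltr01 n1).
Qed.

Theorem mainTheorem3 (R : realType) (eps : R) (heps : 0 < eps) :
  exists C : R, 0 < C /\
    forall (X : finType) (F : {set {set X}}),
      (2 <= #|X|)%N ->
      monotone_increasing F ->
      nontrivial F ->
      forall pc : R, 0 <= pc <= 1 -> mu pc F = 2^-1 ->
      exists p : R,
        (#|X|%:R `^ (- eps)) * pc <= p /\ p <= pc /\
        p * derive1 (fun q : R => mu q F) p <= C * mu p F * log2 ((mu p F)^-1).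
Proof.
set l2 := ln (2 : R); have l2_gt0 : 0 < l2 by rewrite ln_gt0 // ltr1n.
set c := (2 + eps / l2 ^+ 2) / eps.
exists (c * l2); split=> [|X F X2 _ [_ FT] pc /andP[pc_ge0 pc_le1] mu_pc].
  by rewrite mulr_gt0 // divr_gt0 // ltr_wpDr // divr_ge0 // ltW ?exprn_gt0.
have pc_gt0 := mu_eq_half_gt0 pc_ge0 mu_pc.
set a := #|X|%:R `^ (- eps) * pc.
have /andP[r_gt0 r_lt1] : 0 < #|X|%:R `^ (- eps) < 1 by rewrite powRN_in01 ?ltr1n.
have a_gt0 : 0 < a by rewrite mulr_gt0.
have a_lt_pc : a < pc by rewrite gtr_pMl.
have mu_in01 q : a <= q <= pc -> 0 < mu q F < 1.
  case/andP=> aq qpc; apply: (mu_in01_le FT _ pc_le1).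
    by rewrite qpc (lt_le_trans a_gt0).
  by rewrite mu_pc; lra.
have potential_le : ln (- ln (mu a F)) - ln (- ln (mu pc F)) <= c * (ln pc - ln a).
  have /andP[_ mua_lt1] : 0 < mu a F < 1 by apply: mu_in01; rewrite lexx ltW.
  by apply: ln_neg_ln_mu_gap_le; rewrite ?pc_gt0.
have [x /andP[ax xpc] x_elast] :=
  exists_small_elasticity (f := fun q => mu q F) a_gt0 a_lt_pc
    (fun q _ => @mu_derivable R X F q) mu_in01 potential_le.
exists x; do !split => //.
have /andP[mux_gt0 _] : 0 < mu x F < 1 by apply: mu_in01; rewrite ax xpc.
rewrite /log2 lnV ?posrE // -/l2.
have -> : c * l2 * mu x F * (- ln (mu x F) / l2) = c * mu x F * - ln (mu x F).
  by field; rewrite gt_eqF.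
exact: x_elast.
Qed.
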